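(* Let $a,M$ be positive integers and $\lambda=\lambda_1/\lambda_2$ with $\lambda_1,\lambda_2$ coprime integers, $\lambda_2\ge1$. Let $L_{\min}=\lambda_2\,\mathrm{lcm}(a,M)$ and $c=\gcd(a,M)=\prod_{j=1}^Jp_j^{\gamma_j}$ (prime factorization). Let $c_1=\prod_{j=1}^Jp_j^{\sigma_j}$, where $\sigma_j=\gamma_j$ if $\gcd(\lambda_2,p_j)=1$ and $\sigma_j=0$ otherwise (i.e. $c_1$ is the largest divisor of $c$ coprime to $\lambda_2$). If $L=n\,L_{\min}\,\frac{c}{c_1}$ for some $n\in\mathbb{N}$, then, with $b=L/M$, $s=\lambda b$ and $\Lambda\le\mathbb{Z}_L^2$ the subgroup generated by $(a,s)^T$ and $(0,b)^T$, the frequency shear can be chosen to be $0$; that is, there exists $s_1\in\mathbb{Z}_L$ such that $\begin{pmatrix}1&0\\ -s_1&1\end{pmatrix}\Lambda=D\mathbb{Z}_L^2$ for some diagonal matrix $D\in\mathbb{Z}_L^{2\times2}$ (equivalently, $\Lambda=U_{0,s_1}\tilde\Lambda$ for a separable lattice $\tilde\Lambda$, where $U_{s_0,s_1}=\begin{pmatrix}1&-s_0\\-s_1&s_0s_1+1\end{pmatrix}$).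
   Context: All arithmetic in $\mathbb{Z}_L=\mathbb{Z}/L\mathbb{Z}$; $A\mathbb{Z}_L^2=\{Az\bmod L:z\in\mathbb{Z}_L^2\}$ and a lattice is separable if it equals $D\mathbb{Z}_L^2$ for a diagonal $D$. In the paper's terminology, every lattice can be written as $U_{s_0,s_1}D\mathbb{Z}_L^2$ with $U_{s_0,s_1}=S_{-s_1}F^{-1}S_{s_0}F$ ($F=\begin{pmatrix}0&-1\\1&0\end{pmatrix}$, $S_c=\begin{pmatrix}1&0\\c&1\end{pmatrix}$); $s_0$ is the frequency shear and $s_1$ the time shear, and ''the frequency shear can be chosen to be 0'' means such a representation exists with $s_0=0$. Note $L$ of the given form is a multiple of $L_{\min}$, so $a\mid L$, $M\mid L$, and $\frac{L}{a}\lambda,\frac{L}{M}\lambda\in\mathbb{Z}$. *)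

From mathcomp Require Import all_boot all_order all_algebra.
Set Implicit Arguments. Unset Strict Implicit. Unset Printing Implicit Defensive.
Import GRing.Theory Num.Theory.
Local Open Scope ring_scope.

(* Elements of Z_L^2 are represented by integer column vectors, compared mod L. *)
Definition eqmodv (L : int) (u v : 'cV[int]_2) : Prop :=
  forall i : 'I_2, ((u i ord0) = (v i ord0) %[mod L])%Z.

Definition mx2 (p q r t : int) : 'M[int]_2 :=
  \matrix_(i < 2, j < 2)
    if i == 0 :> 'I_2 then (if j == 0 :> 'I_2 then p else q)
    else (if j == 0 :> 'I_2 then r else t).
Definition v2 (x y : int) : 'cV[int]_2 :=
  \col_(i < 2) if i == 0 :> 'I_2 then x else y.

Definition gen_lattice (L : int) (g1 g2 : 'cV[int]_2) : 'cV[int]_2 -> Prop :=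
  fun z => exists k m : int, eqmodv L z (k *: g1 + m *: g2).

Definition mx_image (L : int) (A : 'M[int]_2) (Lam : 'cV[int]_2 -> Prop)
  : 'cV[int]_2 -> Prop :=
  fun z => exists w, Lam w /\ eqmodv L z (A *m w).

Definition mx_range (L : int) (A : 'M[int]_2) : 'cV[int]_2 -> Prop :=
  fun z => exists w, eqmodv L z (A *m w).

Definition c1_of (c l2 : nat) : nat :=
  (\prod_(p <- primes c | coprime l2 p) p ^ logn p c)%N.

From mathcomp Require Import all_boot all_order all_algebra.
From mathcomp Require Import ring.
Import GRing.Theory Num.Theory.

(* Shearing by [[1 0];[-s1 1]] sends the generators (a,s), (0,b) to (a, s - s1 a)
   and (0,b); when s - s1 a is a multiple of b the sheared lattice is generated by
   (a,0) and (0,b), i.e. it is diag(a,b) Z_L^2.  Such an s1 exists as soon as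
   gcd(a,b) divides s, by Bezout.  For the given L one has b = l2 t and s = l1 t,
   and gcd(a,b) | t because a | c1 t while c1 is coprime to l2. *)

Lemma coprime_c1_of c l2 : coprime (c1_of c l2) l2.
Proof.
rewrite /c1_of; apply: (big_ind (fun x => coprime x l2)) => [|x y cx cy|p cop_p].
- exact: coprime1n.
- by rewrite coprimeMl cx cy.
- by apply: coprimeXl; rewrite coprime_sym.
Qed.

Lemma c1_of_dvd c l2 : (0 < c)%N -> (c1_of c l2 %| c)%N.
Proof.
move=> c_gt0; rewrite {2}(prod_prime_decomp c_gt0) prime_decompE big_map /=.
by rewrite (bigID (coprime l2)) dvdn_mulr.
Qed.

Lemma gcdn_dvd_cofactor a k l t :
  coprime k l -> (a %| k * t)%N -> (gcdn a (l * t) %| t)%N.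
Proof.
move=> /eqP cop_kl a_dvd.
have : (gcdn a (l * t) %| gcdn (k * t) (l * t))%N.
  by rewrite dvdn_gcd dvdn_gcdr (dvdn_trans (dvdn_gcdl _ _) a_dvd).
by rewrite -muln_gcdl cop_kl mul1n.
Qed.

Section LatticeParameters.

Variables (a M l2 n : nat).
Hypotheses (a_gt0 : (0 < a)%N) (M_gt0 : (0 < M)%N).

Let c := gcdn a M.
Let c1 := c1_of c l2.
Let t := (n * (a %/ c) * (c %/ c1))%N.

Lemma divn_L_M :
  ((n * (l2 * lcmn a M) * (c %/ c1)) %/ M = l2 * t)%N.
Proof.
have -> : lcmn a M = (a %/ c * M)%N by rewrite divn_mulAC ?dvdn_gcdl.
have -> : (n * (l2 * (a %/ c * M)) * (c %/ c1) = l2 * t * M)%N by rewrite /t; ring.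
by rewrite mulnK.
Qed.

Lemma gcdn_dvd_b_cofactor : (gcdn a (l2 * t) %| t)%N.
Proof.
apply: gcdn_dvd_cofactor (coprime_c1_of c l2) _.
have c_gt0 : (0 < c)%N by rewrite gcdn_gt0 a_gt0.
have a_eq : a = (a %/ c * c)%N by rewrite divnK ?dvdn_gcdl.
have c_eq : c = (c %/ c1 * c1)%N by rewrite divnK ?c1_of_dvd.
have -> : (c1 * t = n * a)%N.
  by rewrite /t {2}a_eq; move: (a %/ c) (c %/ c1) c_eq => a' q ->; ring.
exact: dvdn_mull.
Qed.

End LatticeParameters.

Local Open Scope ring_scope.

Lemma bezout_shear (a b s : int) :
  (gcdz a b %| s)%Z -> exists s1 w, s - s1 * a = w * b.
Proof.
move=> /dvdzP [r ->]; have [u [v <-]] := Bezoutz a b.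
by exists (r * u), (r * v); ring.
Qed.

Lemma v2_eta (v : 'cV[int]_2) : v = v2 (v 0 0) (v 1 0).
Proof.
apply/matrixP => i j; rewrite !mxE (ord1 j).
by case: i => [[|[|i]] hi] //=; congr (v _ _); apply: val_inj.
Qed.

Lemma mul_mx2_v2 p q r t x y :
  mx2 p q r t *m v2 x y = v2 (p * x + q * y) (r * x + t * y).
Proof.
apply/matrixP => i j; rewrite !mxE !big_ord_recr big_ord0 /= !mxE add0r.
by case: i => [[|[|i]] hi].
Qed.

Lemma scale_add_v2 (k m x y x' y' : int) :
  k *: v2 x y + m *: v2 x' y' = v2 (k * x + m * x') (k * y + m * y').
Proof. by apply/matrixP => i j; rewrite !mxE; case: (i == 0). Qed.

Lemma eqz_modP (L x y : int) : (x = y %[mod L])%Z <-> exists q, x = y + q * L.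
Proof.
split.
- by move/eqP; rewrite eqz_mod_dvd => /dvdzP [q hq]; exists q; rewrite -hq; ring.
- by move=> [q ->]; apply/eqP; rewrite eqz_mod_dvd; apply/dvdzP; exists q; ring.
Qed.

Lemma eqmodv_v2 L x y x' y' : eqmodv L (v2 x y) (v2 x' y') <->
  (exists q, x = x' + q * L) /\ (exists q, y = y' + q * L).
Proof.
split.
- by move=> h; split; apply/eqz_modP; [move: (h 0) | move: (h 1)]; rewrite !mxE.
- by move=> [/eqz_modP h0 /eqz_modP h1] [[|[|]]] // ?; rewrite !mxE.
Qed.

Lemma is_diag_mx2 p t : is_diag_mx (mx2 p 0 0 t).
Proof.
apply/is_diag_mxP => i j; rewrite !mxE.
by case: i => [[|[|]] ?] //; case: j => [[|[|]] ?].
Qed.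

Section ShearedLattice.

Context {L a b s s1 w : int}.
Hypothesis shear_eq : s - s1 * a = w * b.

Let s_eq : s = w * b + s1 * a.
Proof. by rewrite -shear_eq; ring. Qed.

Let Lam := gen_lattice L (v2 a s) (v2 0 b).
Let U := mx2 1 0 (- s1) 1.
Let D := mx2 a 0 0 b.

Lemma sheared_lattice_sub z : mx_image L U Lam z -> mx_range L D z.
Proof.
rewrite (v2_eta z) => -[v [[k [m]]]].
rewrite (v2_eta v) scale_add_v2 mul_mx2_v2 !eqmodv_v2.
move=> [[q0 e0] [q1 e1]] [[r0 f0] [r1 f1]].
exists (v2 k (k * w + m)); rewrite mul_mx2_v2 eqmodv_v2; split.
- by exists (r0 + q0); rewrite f0 e0; ring.
- by exists (r1 - s1 * q0 + q1); rewrite f1 e0 e1 s_eq; ring.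
Qed.

Lemma sheared_lattice_sup z : mx_range L D z -> mx_image L U Lam z.
Proof.
rewrite (v2_eta z) => -[v]; rewrite (v2_eta v) mul_mx2_v2 eqmodv_v2.
set x := v 0 0; set y := v 1 0 => -[[q0 e0] [q1 e1]].
exists (v2 (x * a) (x * s + (y - x * w) * b)); split.
- by exists x, (y - x * w); rewrite scale_add_v2 eqmodv_v2; split; exists 0; ring.
- rewrite mul_mx2_v2 eqmodv_v2; split.
  + by exists q0; rewrite e0; ring.
  + by exists q1; rewrite e1 s_eq; ring.
Qed.

End ShearedLattice.

Theorem proposition3p8 (a M : nat) (l1 : int) (l2 : nat) (n : nat) :
  (0 < a)%N -> (0 < M)%N -> (1 <= l2)%N -> coprimez l1 (l2%:Z) -> (0 < n)%N ->
  let Lmin := (l2 * lcmn a M)%N in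
  let c := gcdn a M in
  let c1 := c1_of c l2 in
  let L := (n * Lmin * (c %/ c1))%N in
  let b := (L %/ M)%N in
  (* s = lambda * b = l1 * (b / l2), an integer since l2 | b *)
  let s := l1 * (b %/ l2)%N%:Z in
  let Lam := gen_lattice L%:Z (v2 a%:Z s) (v2 0 b%:Z) in
  exists s1 : int, exists D : 'M[int]_2, is_diag_mx D /\
    forall z : 'cV[int]_2,
      mx_image L%:Z (mx2 1 0 (- s1) 1) Lam z <-> mx_range L%:Z D z.
Proof.
move=> a_gt0 M_gt0 l2_gt0 _ _ Lmin c c1 L b s Lam.
set t := (n * (a %/ c) * (c %/ c1))%N.
have b_eq : b = (l2 * t)%N by exact: divn_L_M.
have s_eq : s = l1 * t%:Z by rewrite /s b_eq mulKn.
have /bezout_shear [s1 [w shear_eq]] : (gcdz a%:Z b%:Z %| s)%Z.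
  by rewrite s_eq dvdz_mull // b_eq dvdzE gcdn_dvd_b_cofactor.
exists s1, (mx2 a%:Z 0 0 b%:Z); split; first exact: is_diag_mx2.
move=> z; split; first exact: sheared_lattice_sub shear_eq z.
exact: sheared_lattice_sup shear_eq z.
Qed.
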